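(* Let $A$ be a finite nonempty subset of an abelian group. Suppose $\mathsf E(A)=|A|^3/K$ and $\mathsf E_3(A)=M|A|^4/K^2$. Then there exists $A'\subseteq A$ with $|A'|\ge c|A|/M$ and $|A'-A'|\le CM^6K^4|A'|$, where $c,C>0$ are absolute constants.
   Context: $(A\circ A)(x)=|\{(a,b)\in A^2:b-a=x\}|$, $\mathsf E_k(A)=\sum_x(A\circ A)(x)^k$, $\mathsf E(A)=\mathsf E_2(A)$. *)

From HB Require Import structures.
From mathcomp Require Import all_boot all_order all_algebra.
From mathcomp Require Import finmap.
Set Implicit Arguments. Unset Strict Implicit. Unset Printing Implicit Defensive.
Import Order.TTheory GRing.Theory Num.Theory.
Local Open Scope fset_scope.

Definition diffset (G : zmodType) (A : {fset G}) : {fset G} :=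
  [fset (x - y)%R | x in A, y in A].

Definition rep (G : zmodType) (A : {fset G}) (x : G) : nat :=
  #|` [fset p in A `*` A | (p.2 - p.1)%R == x] |.

(* E_k(A) = sum_x (A o A)(x)^k ; the sum over x in A - A is the full sum,
   since (A o A)(x) = 0 outside A - A. *)
Definition energyk (k : nat) (G : zmodType) (A : {fset G}) : nat :=
  (\sum_(x <- diffset A) rep A x ^ k)%N.

Definition energy (G : zmodType) (A : {fset G}) : nat := energyk 2 A.

(* Balog-Szemeredi-Gowers through dependent random choice.  Call a difference x popular if
   (A o A)(x) >= tau := E(A) / (2|A|^2).  Popular differences carry at least half of E(A), so the
   graph on A joining w to a whenever a - w is popular has D >= E(A)^2 / (4 E_3(A)) edges.
   Dependent random choice gives a vertex w of degree d >= D / (2|A|) and a set A' of at least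
   3d/4 of its neighbours in which every pair a, b has at least d/3 common neighbours c whose
   codegrees with a and with b are at least m := D^2 / (48|A|^3).  Each path a - w' - c writes
   a - c as a difference of two popular differences, so a - b has at least tau^4 m^2 d / 3
   representations as an alternating sum of eight elements of A.  There are only |A|^8 such
   sums, whence |A' - A'| <= 3|A|^8 / (tau^4 m^2 d); the rest is arithmetic in |A|, E and E_3. *)

From HB Require Import structures.
From mathcomp Require Import all_boot all_order all_algebra.
From mathcomp Require Import finmap.
From mathcomp Require Import ring lra.
Set Implicit Arguments. Unset Strict Implicit. Unset Printing Implicit Defensive.
Import Order.TTheory GRing.Theory Num.Theory.
Local Open Scope fset_scope.
Local Open Scope ring_scope.

Section IndicatorSums.
Variable R : numDomainType.

Lemma sumr_pred1_seq (T : eqType) (s : seq T) (t : T) (F : T -> R) :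
  uniq s -> \sum_(x <- s) (x == t)%:R * F x = (t \in s)%:R * F t.
Proof.
elim: s => [|y s IHs] /=; first by rewrite big_nil mul0r.
case/andP=> ys us; rewrite big_cons IHs // in_cons.
have [<-|_] := eqVneq y t; last by rewrite mul0r add0r.
by rewrite (negbTE ys) mul0r addr0.
Qed.

Lemma sumr_pred1_seq_le (T : eqType) (s : seq T) (t : T) (F : T -> R) :
  uniq s -> 0 <= F t -> \sum_(x <- s) (x == t)%:R * F x <= F t.
Proof. by move=> us F0; rewrite sumr_pred1_seq //; case: (t \in s); rewrite ?mul1r ?mul0r. Qed.

Lemma sumr_eq_le1 (T : eqType) (s : seq T) (t : T) :
  uniq s -> \sum_(x <- s) (t == x)%:R <= 1 :> R.
Proof.
move=> us; rewrite (eq_bigr (fun x => (x == t)%:R * 1)).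
  exact: sumr_pred1_seq_le.
by move=> x _; rewrite mulr1 eq_sym.
Qed.

Lemma ler_sum_seq (T : eqType) (s : seq T) (F H : T -> R) :
  {in s, forall x, F x <= H x} -> \sum_(x <- s) F x <= \sum_(x <- s) H x.
Proof. by move=> FH; rewrite big_seq [leRHS]big_seq; apply: ler_sum. Qed.

Lemma sumr_const_fset (T : choiceType) (A : {fset T}) (c : R) :
  \sum_(a <- A) c = c * (#|` A|)%:R.
Proof. by rewrite card_fset_sum1 natr_sum mulr_sumr; apply: eq_bigr => _ _; rewrite mulr1. Qed.

Lemma card_fset_sep (T : choiceType) (A : {fset T}) (P : pred T) :
  (#|` [fset a in A | P a]|)%:R = \sum_(a <- A) (P a)%:R :> R.
Proof.
rewrite card_fset_sum1 -big_fset_condE big_mkcond natr_sum /=.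
by apply: eq_bigr => a _; case: (P a).
Qed.

End IndicatorSums.

Lemma big_fsetM (R : Type) (idx : R) (op : Monoid.com_law idx) (I J : choiceType)
    (A : {fset I}) (B : {fset J}) (F : I * J -> R) :
  \big[op/idx]_(p <- A `*` B) F p = \big[op/idx]_(i <- A) \big[op/idx]_(j <- B) F (i, j).
Proof. by rewrite /fsetM big_imfset2 //= => -[? ?] [? ?] _ _ [-> ->]. Qed.

Section Representation.
Variables (R : numDomainType) (G : zmodType) (A : {fset G}).

Lemma in_diffset u v : u \in A -> v \in A -> v - u \in diffset A.
Proof. by move=> uA vA; apply/imfset2P; exists v => //; exists u. Qed.

Lemma diffsetP x :
  reflect (exists2 a, a \in A & exists2 b, b \in A & x = a - b) (x \in diffset A).
Proof.
apply: (iffP idP) => [/imfset2P [a aA [b bA ->]]|[a aA [b bA ->]]]; last exact: in_diffset.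
by exists a => //; exists b.
Qed.

Lemma repE x : (rep A x)%:R = \sum_(u <- A) \sum_(v <- A) (v - u == x)%:R :> R.
Proof. by rewrite /rep card_fset_sep big_fsetM. Qed.

Lemma rep_gt0 u v : u \in A -> v \in A -> (0 < rep A (v - u))%N.
Proof.
by move=> uA vA; rewrite cardfs_gt0; apply/fset0Pn; exists (u, v); rewrite !inE uA vA /=.
Qed.

Lemma rep_eq0 x : x \notin diffset A -> rep A x = 0%N.
Proof.
move=> xA; apply/eqP; rewrite cardfs_eq0 -fsubset0; apply/fsubsetP => -[u v].
by rewrite !inE /= => /andP [/andP [uA vA] /eqP vux]; rewrite -vux in_diffset in xA.
Qed.

Lemma sum_diffset_rep (g : G -> R) :
  \sum_(x <- diffset A) (rep A x)%:R * g x = \sum_(u <- A) \sum_(v <- A) g (v - u).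
Proof.
rewrite (eq_bigr (fun x => \sum_(u <- A) \sum_(v <- A) (x == v - u)%:R * g x)); last first.
  by move=> x _; rewrite repE mulr_suml; apply: eq_bigr => u _; rewrite mulr_suml;
     apply: eq_bigr => v _; rewrite eq_sym.
rewrite exchange_big; apply: eq_big_seq => u uA.
rewrite exchange_big; apply: eq_big_seq => v vA /=.
by rewrite sumr_pred1_seq ?fset_uniq // in_diffset // mul1r.
Qed.

Lemma energykE k :
  (energyk k.+1 A)%:R = \sum_(u <- A) \sum_(v <- A) (rep A (v - u))%:R ^+ k :> R.
Proof.
rewrite /energyk natr_sum -(sum_diffset_rep (fun x => (rep A x)%:R ^+ k)); apply: eq_bigr => x _.
by rewrite natrX exprS.
Qed.

Lemma sum_rep : \sum_(x <- diffset A) (rep A x)%:R = (#|` A|)%:R ^+ 2 :> R.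
Proof.
rewrite (eq_bigr (fun x => (rep A x)%:R * 1)) => [|x _]; last by rewrite mulr1.
by rewrite sum_diffset_rep !sumr_const_fset mul1r expr2.
Qed.

Lemma sqr_card_le_energyk k : (#|` A|)%:R ^+ 2 <= (energyk k.+1 A)%:R :> R.
Proof.
rewrite energykE -(mul1r (_ ^+ 2)) expr2 mulrA -!sumr_const_fset.
apply: ler_sum_seq => u uA; apply: ler_sum_seq => v vA.
by rewrite exprn_ege1 // ler1n rep_gt0.
Qed.

End Representation.

Section DifferenceConvolution.
Variables (R : numDomainType) (G : zmodType).

Definition diffconv (Y : {fset G}) (f g : G -> R) (z : G) : R :=
  \sum_(y1 <- Y) \sum_(y2 <- Y) f y1 * g y2 * (y1 - y2 == z)%:R.

Variables (Y : {fset G}) (f g : G -> R).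
Hypotheses (f_ge0 : forall y, 0 <= f y) (g_ge0 : forall y, 0 <= g y).

Lemma diffconv_ge0 z : 0 <= diffconv Y f g z.
Proof. by apply: sumr_ge0 => y1 _; apply: sumr_ge0 => y2 _; rewrite !mulr_ge0. Qed.

Lemma diffconv_eq0 z : z \notin diffset Y -> diffconv Y f g z = 0.
Proof.
move=> zY; rewrite /diffconv big1_fset // => y1 y1Y _; rewrite big1_fset // => y2 y2Y _.
by case: eqP => [yz|]; [rewrite -yz in_diffset in zY | rewrite mulr0].
Qed.

Lemma sum_diffconv_le (S : seq G) : uniq S ->
  \sum_(z <- S) diffconv Y f g z <= (\sum_(y <- Y) f y) * (\sum_(y <- Y) g y).
Proof.
move=> uS; rewrite /diffconv exchange_big mulr_suml; apply: ler_sum => y1 _.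
rewrite exchange_big mulr_sumr; apply: ler_sum => y2 _.
by rewrite -mulr_sumr ler_piMr ?mulr_ge0 ?sumr_eq_le1.
Qed.

Lemma eq_sum_support (h : G -> R) t :
  (forall t, t \notin Y -> h t = 0) -> h t = \sum_(y <- Y) (y == t)%:R * h y.
Proof.
move=> h_supp; rewrite sumr_pred1_seq ?fset_uniq //.
by case: (boolP (t \in Y)) => [_|tY]; rewrite ?mul1r // mul0r h_supp.
Qed.

Hypotheses (f_supp : forall t, t \notin Y -> f t = 0) (g_supp : forall t, t \notin Y -> g t = 0).

(* The term of index [w] vanishes unless [w = p - y1]. *)
Lemma sum_pair_eq_le (S : seq G) (y1 y2 p q : G) : uniq S ->
  \sum_(w <- S) (y1 == p - w)%:R * (y2 == q - w)%:R <= (y1 - y2 == p - q)%:R :> R.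
Proof.
move=> uS; have [_|ne] := eqVneq (y1 - y2) (p - q).
  rewrite mulr1n; apply: (le_trans _ (sumr_eq_le1 R (p - y1) uS)); apply: ler_sum => w _.
  have -> : (y1 == p - w) = (p - y1 == w).
    by apply/eqP/eqP => [->|<-]; rewrite opprB addrC subrK.
  by case: (_ == w); case: (y2 == _); rewrite ?mulr1 ?mulr0.
rewrite big1 // => w _; have [y1E|] := eqVneq y1 (p - w); last by rewrite mul0r.
have [y2E|] := eqVneq y2 (q - w); last by rewrite mulr0.
by move: ne; rewrite y1E y2E opprB addrA subrK eqxx.
Qed.

Lemma sum_mul_le_diffconv (S : seq G) p q : uniq S ->
  \sum_(w <- S) f (p - w) * g (q - w) <= diffconv Y f g (p - q).
Proof.
move=> uS.
under eq_bigr => w _ do rewrite (@eq_sum_support f (p - w) f_supp)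
  (@eq_sum_support g (q - w) g_supp) big_distrlr /=.
rewrite /diffconv exchange_big; apply: ler_sum => y1 _.
rewrite exchange_big; apply: ler_sum => y2 _.
rewrite (eq_bigr (fun w => f y1 * g y2 * ((y1 == p - w)%:R * (y2 == q - w)%:R))).
  by rewrite -mulr_sumr ler_wpM2l ?mulr_ge0 ?sum_pair_eq_le.
by move=> w _; ring.
Qed.

End DifferenceConvolution.

Lemma natr_bool_cover (R : numDomainType) (p x y : bool) :
  p%:R <= p%:R * x%:R * y%:R + p%:R * (~~ x)%:R + p%:R * (~~ y)%:R :> R.
Proof.
by case: p; case: x; case: y;
  rewrite /= ?mulr1n ?mulr0n ?mul1r ?mul0r ?mulr1 ?mulr0 ?add0r ?addr0 ?lerDl.
Qed.

Section DependentRandomChoice.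
Variables (R : realFieldType) (T : choiceType) (A : {fset T}) (e : rel T).
Local Notation N := ((#|` A|)%:R : R).

Definition degree (w : T) : R := \sum_(a <- A) (e w a)%:R.
Definition codegree (a b : T) : R := \sum_(w <- A) (e w a)%:R * (e w b)%:R.
Definition edge_count : R := \sum_(w <- A) degree w.
Definition codegree_threshold : R := edge_count ^+ 2 / (48 * N ^+ 3).
Local Notation D := edge_count.
Local Notation m := codegree_threshold.

Lemma degree_ge0 w : 0 <= degree w.
Proof. exact: sumr_ge0. Qed.

Lemma codegree_ge0 a b : 0 <= codegree a b.
Proof. by apply: sumr_ge0 => w _; rewrite mulr_ge0. Qed.

Hypothesis edge_count_gt0 : 0 < D.

Let N_gt0 : 0 < N.
Proof.
rewrite ltr0n cardfs_gt0; apply: contraTneq edge_count_gt0 => A0.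
by rewrite /edge_count A0 big_seq_fset0 ltxx.
Qed.

Lemma codegree_threshold_ge0 : 0 <= m.
Proof. by rewrite divr_ge0 ?sqr_ge0 ?mulr_ge0 ?exprn_ge0 ?ltW ?N_gt0. Qed.

Definition rich w := D <= 2 * N * degree w.

(* Summed over [w]: [3 N D d - 2 D^2] is at most [2 N^2 d^2] on rich [w] and [<= 0] otherwise. *)
Lemma sqr_edge_count_le :
  D ^+ 2 <= 2 * N * \sum_(w <- A) (rich w)%:R * degree w ^+ 2.
Proof.
have pointwise w :
    3 * N * D * degree w - 2 * D ^+ 2 <= 2 * N ^+ 2 * ((rich w)%:R * degree w ^+ 2).
  have d0 := degree_ge0 w; have [wR|wP] := boolP (rich w).
    rewrite mulr1n mul1r; have := sqr_ge0 (4 * N * degree w - 3 * D); have := sqr_ge0 D; nra.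
  rewrite /rich -ltNge -subr_gt0 in wP; rewrite mulr0n mul0r mulr0.
  have := mulr_ge0 (ltW edge_count_gt0) (ltW wP); nra.
have : \sum_(w <- A) (3 * N * D * degree w - 2 * D ^+ 2) <=
    \sum_(w <- A) 2 * N ^+ 2 * ((rich w)%:R * degree w ^+ 2).
  by apply: ler_sum => w _; exact: pointwise.
rewrite sumrB -!mulr_sumr -/edge_count sumr_const_fset => le_sum.
by rewrite -(ler_pM2l N_gt0); nra.
Qed.

Definition sparse_pairs w : R :=
  \sum_(a <- A) \sum_(b <- A) (e w a)%:R * (e w b)%:R * (codegree a b < m)%R%:R.

Lemma sum_sparse_pairs_le : \sum_(w <- A) sparse_pairs w <= m * N ^+ 2.
Proof.
have -> : \sum_(w <- A) sparse_pairs w =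
    \sum_(a <- A) \sum_(b <- A) (codegree a b < m)%R%:R * codegree a b.
  rewrite exchange_big; apply: eq_bigr => a _; rewrite exchange_big.
  by apply: eq_bigr => b _; rewrite mulr_sumr; apply: eq_bigr => w _; rewrite mulrC.
rewrite expr2 mulrA -sumr_const_fset; apply: ler_sum => a _.
rewrite -sumr_const_fset; apply: ler_sum => b _.
by case: ltP => [/ltW|_]; rewrite ?mulr1n ?mul1r // mulr0n mul0r codegree_threshold_ge0.
Qed.

Lemma sparse_pairs_ge0 w : 0 <= sparse_pairs w.
Proof. by apply: sumr_ge0 => a _; apply: sumr_ge0 => b _; rewrite !mulr_ge0. Qed.

Lemma exists_rich_vertex :
  exists2 w, w \in A & rich w && (12 * sparse_pairs w < degree w ^+ 2).
Proof.
apply/hasP/negPn/negP => /hasPn dense.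
have rich_le w : w \in A -> (rich w)%:R * degree w ^+ 2 <= 12 * sparse_pairs w.
  move=> wA; have := dense w wA; rewrite negb_and -leNgt.
  case: (rich w) => /= [//|_]; first by rewrite mulr1n mul1r.
  by rewrite mulr0n mul0r mulr_ge0 ?sparse_pairs_ge0.
have : D ^+ 2 <= 2 * N * (12 * (m * N ^+ 2)).
  apply: (le_trans sqr_edge_count_le); rewrite ler_pM2l ?mulr_gt0 ?N_gt0 //.
  apply: (@le_trans _ _ (\sum_(w <- A) 12 * sparse_pairs w)); first exact: ler_sum_seq.
  by rewrite -mulr_sumr ler_pM2l ?sum_sparse_pairs_le.
have -> : 2 * N * (12 * (m * N ^+ 2)) = D ^+ 2 / 2.
  by rewrite /codegree_threshold; field; rewrite gt_eqF ?N_gt0.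
by have := exprn_gt0 2 edge_count_gt0; lra.
Qed.

Section Core.
Variable w : T.
Local Notation d := (degree w).

Definition sparse_degree a : R := \sum_(b <- A) (e w b)%:R * (codegree a b < m)%R%:R.

Definition core : {fset T} := [fset a in A | e w a && (3 * sparse_degree a <= d)].

Lemma sparse_degree_ge0 a : 0 <= sparse_degree a.
Proof. by apply: sumr_ge0 => b _; rewrite mulr_ge0. Qed.

Lemma sum_sparse_degree : \sum_(a <- A) (e w a)%:R * sparse_degree a = sparse_pairs w.
Proof. by apply: eq_bigr => a _; rewrite mulr_sumr; apply: eq_bigr => b _; rewrite mulrA. Qed.

Lemma core_large : 12 * sparse_pairs w < d ^+ 2 -> 3 * d <= 4 * (#|` core|)%:R.
Proof.
move=> dense; have d_gt0 : 0 < d.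
  by rewrite lt_neqAle degree_ge0 andbT; apply: contraTneq dense => <-; rewrite -leNgt
    expr0n mulr_ge0 ?sparse_pairs_ge0.
have pointwise a : (e w a)%:R * d <=
    d * (e w a && (3 * sparse_degree a <= d))%:R + 3 * ((e w a)%:R * sparse_degree a).
  have := sparse_degree_ge0 a; case: (e w a) => /= sd_ge0; last first.
    by rewrite !mulr0n !mul0r !mulr0 addr0.
  rewrite mulr1n !mul1r; have [_|] := boolP (3 * sparse_degree a <= d).
    by rewrite mulr1n mulr1; lra.
  by rewrite -ltNge mulr0n mulr0; lra.
have : d * d <= d * (#|` core|)%:R + 3 * sparse_pairs w.
  rewrite [X in X * _]/degree mulr_suml card_fset_sep -sum_sparse_degree !mulr_sumr.
  by rewrite -big_split; apply: ler_sum => a _; exact: pointwise.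
by rewrite -expr2; move: dense; nra.
Qed.

Lemma core_common_neighbours a b : a \in core -> b \in core ->
  d <= 3 * \sum_(c <- A) (e w c)%:R * (m <= codegree a c)%R%:R * (m <= codegree b c)%R%:R.
Proof.
rewrite !inE /= => /andP [_ /andP [_ sa]] /andP [_ /andP [_ sb]].
suff : d <= \sum_(c <- A) (e w c)%:R * (m <= codegree a c)%R%:R * (m <= codegree b c)%R%:R
    + sparse_degree a + sparse_degree b by lra.
rewrite /degree /sparse_degree -!big_split; apply: ler_sum => c _.
by rewrite !ltNge natr_bool_cover.
Qed.

End Core.

Theorem dependent_random_choice :
  exists w (A' : {fset T}), [/\ A' `<=` A, 0 < degree w, D <= 2 * N * degree w,
    3 * degree w <= 4 * (#|` A'|)%:R &
    {in A' &, forall a b, degree w <= 3 *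
      \sum_(c <- A) (e w c)%:R * (m <= codegree a c)%R%:R * (m <= codegree b c)%R%:R}].
Proof.
have [w _ /andP [w_rich w_dense]] := exists_rich_vertex.
exists w, (core w); split.
- exact: fset_sub.
- by have := lt_le_trans edge_count_gt0 w_rich; rewrite pmulr_rgt0 // mulr_gt0 ?N_gt0.
- exact: w_rich.
- exact: core_large.
- exact: core_common_neighbours.
Qed.

End DependentRandomChoice.

Section PopularDifferences.
Variables (R : realFieldType) (G : zmodType) (A : {fset G}).
Hypothesis A_neq0 : A != fset0.

Let N : R := (#|` A|)%:R.
Let E : R := (energy A)%:R.
Let E3 : R := (energyk 3 A)%:R.
Let r (x : G) : R := (rep A x)%:R.

Let N_gt0 : 0 < N. Proof. by rewrite ltr0n cardfs_gt0. Qed.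
Let E_gt0 : 0 < E. Proof. exact: lt_le_trans (exprn_gt0 2 N_gt0) (sqr_card_le_energyk R A 1). Qed.
Let E3_gt0 : 0 < E3. Proof. exact: lt_le_trans (exprn_gt0 2 N_gt0) (sqr_card_le_energyk R A 2). Qed.
Let r_ge0 x : 0 <= r x. Proof. exact: ler0n. Qed.
Let r_supp x : x \notin diffset A -> r x = 0.
Proof. by move/rep_eq0=> rep0; rewrite /r rep0. Qed.

Definition popular_threshold : R := E / (2 * N ^+ 2).
Local Notation tau := popular_threshold.

Definition popular : rel G := fun w a => tau <= r (a - w).

Let tau_gt0 : 0 < tau. Proof. by rewrite divr_gt0 // mulr_gt0 // exprn_gt0. Qed.

(* Unpopular differences contribute at most [tau N^2 = E / 2] to the energy. *)
Lemma energy_le_popular :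
  E <= 2 * \sum_(u <- A) \sum_(v <- A) (popular u v)%:R * r (v - u).
Proof.
have : E <= \sum_(u <- A) \sum_(v <- A) (popular u v)%:R * r (v - u) + tau * N ^+ 2.
  have -> : tau * N ^+ 2 = \sum_(u <- A) \sum_(v <- A) tau.
    by rewrite !sumr_const_fset expr2 mulrA.
  rewrite /E /energy (energykE R A 1) -big_split; apply: ler_sum => u _.
  rewrite -big_split; apply: ler_sum => v _ /=; rewrite expr1 /popular /r.
  have [_|] := boolP (tau <= _); first by rewrite mulr1n mul1r lerDl ltW.
  by rewrite -ltNge mulr0n mul0r add0r => /ltW.
have -> : tau * N ^+ 2 = E / 2 by rewrite /tau; field; rewrite gt_eqF.
lra.
Qed.

(* AM-GM replaces Cauchy-Schwarz: [4 E3 E x <= 4 E3^2 + E^2 x^2] for every popular count [x]. *)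
Lemma sqr_energy_le : E ^+ 2 <= 4 * E3 * edge_count R A popular.
Proof.
set S := \sum_(u <- A) \sum_(v <- A) (popular u v)%:R * r (v - u).
have amgm : 4 * E3 * E * S <= 4 * E3 ^+ 2 * edge_count R A popular + E ^+ 2 * E3.
  have E3E : E3 = \sum_(u <- A) \sum_(v <- A) r (v - u) ^+ 2 := energykE R A 2.
  rewrite [X in _ <= _ + _ * X]E3E /S /edge_count /degree.
  rewrite !mulr_sumr -big_split; apply: ler_sum => u _.
  rewrite !mulr_sumr -big_split; apply: ler_sum => v _ /=.
  rewrite /popular /r; case: (tau <= _); rewrite ?mulr1n ?mulr0n ?mul1r ?mul0r ?mulr0 ?add0r.
    by have := sqr_ge0 (2 * E3 - E * (rep A (v - u))%:R); nra.
  by rewrite mulr_ge0 ?sqr_ge0.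
have := energy_le_popular; rewrite -/S => le_ES.
have : 2 * E3 * E * E <= 2 * E3 * E * (2 * S) by rewrite ler_pM2l ?mulr_gt0.
by move=> le_E2; rewrite -(ler_pM2l E3_gt0); nra.
Qed.

(* [r2 z] counts the [(u, v, u', v')] in [A^4] with [(v - u) - (v' - u') = z], and [r4] the
   octuples of [A] with [z] as the corresponding alternating sum. *)
Let r2 := diffconv (diffset A) r r.
Let r4 := diffconv (diffset (diffset A)) r2 r2.
Let r2_ge0 z : 0 <= r2 z. Proof. exact: diffconv_ge0. Qed.
Let r2_supp z : z \notin diffset (diffset A) -> r2 z = 0. Proof. exact: diffconv_eq0. Qed.

Lemma popular_codegree_le a c : tau ^+ 2 * codegree R A popular a c <= r2 (a - c).
Proof.
apply: (le_trans _ (sum_mul_le_diffconv r_ge0 r_ge0 r_supp r_supp a c (fset_uniq A))).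
have tau_le y : tau * (tau <= r y)%R%:R <= r y.
  by have [//|_] := boolP (tau <= r y); rewrite ?mulr1n ?mulr1 // mulr0n mulr0.
rewrite /codegree mulr_sumr; apply: ler_sum => w _; rewrite /popular expr2 mulrACA.
by apply: ler_pM; rewrite ?tau_le // mulr_ge0 ?ler0n // ltW.
Qed.

Lemma popular_common_neighbours_le (m : R) w a b : 0 <= m ->
  tau ^+ 4 * m ^+ 2 * \sum_(c <- A) (popular w c)%:R *
    (m <= codegree R A popular a c)%R%:R * (m <= codegree R A popular b c)%R%:R
  <= r4 (a - b).
Proof.
move=> m_ge0.
apply: (le_trans _ (sum_mul_le_diffconv r2_ge0 r2_ge0 r2_supp r2_supp a b (fset_uniq A))).
rewrite mulr_sumr; apply: ler_sum => c _.
have tau2_ge0 : 0 <= tau ^+ 2 by rewrite exprn_ge0 // ltW.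
have ca_ge0 := codegree_ge0 R A popular a c; have cb_ge0 := codegree_ge0 R A popular b c.
apply: (@le_trans _ _ ((tau ^+ 2 * codegree R A popular a c) *
                       (tau ^+ 2 * codegree R A popular b c))); last first.
  by apply: ler_pM; [exact: mulr_ge0 | exact: mulr_ge0 | exact: popular_codegree_le..].
have prod_ge0 : 0 <= (tau ^+ 2 * codegree R A popular a c) *
                     (tau ^+ 2 * codegree R A popular b c) by apply: mulr_ge0; apply: mulr_ge0.
have [ma|_] := boolP (m <= codegree R A popular a c);
have [mb|_] := boolP (m <= codegree R A popular b c); case: (popular w c);
  rewrite ?mulr1n ?mulr0n ?mul1r ?mul0r ?mulr1 ?mulr0 //.
have -> : tau ^+ 4 * m ^+ 2 = (tau ^+ 2 * m) * (tau ^+ 2 * m) by ring.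
by apply: ler_pM; [exact: mulr_ge0 | exact: mulr_ge0 | exact: ler_wpM2l..].
Qed.

Lemma sum_r2_le : \sum_(z <- diffset (diffset A)) r2 z <= N ^+ 4.
Proof.
apply: le_trans (sum_diffconv_le (diffset A) r_ge0 r_ge0 (fset_uniq _)) _.
by rewrite /r sum_rep -exprD.
Qed.

Lemma sum_r4_le (S : seq G) : uniq S -> \sum_(x <- S) r4 x <= N ^+ 8.
Proof.
move=> uS; apply: le_trans (sum_diffconv_le _ r2_ge0 r2_ge0 uS) _.
have sum_ge0 : 0 <= \sum_(z <- diffset (diffset A)) r2 z by exact: sumr_ge0.
by rewrite [N ^+ 8](exprD N 4 4); apply: ler_pM; rewrite ?sum_r2_le.
Qed.

Lemma card_diffset_le (A' : {fset G}) w (m : R) : 0 <= m ->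
  {in A' &, forall a b, degree R A popular w <= 3 * \sum_(c <- A) (popular w c)%:R *
     (m <= codegree R A popular a c)%R%:R * (m <= codegree R A popular b c)%R%:R} ->
  (#|` diffset A'|)%:R * (tau ^+ 4 * m ^+ 2 * degree R A popular w) <= 3 * N ^+ 8.
Proof.
move=> m_ge0 common.
have tm_ge0 : 0 <= tau ^+ 4 * m ^+ 2 by rewrite mulr_ge0 ?exprn_ge0 // ltW.
rewrite card_fset_sum1 natr_sum mulr_suml.
apply: (@le_trans _ _ (\sum_(x <- diffset A') 3 * r4 x)); last first.
  by rewrite -mulr_sumr ler_pM2l ?sum_r4_le ?fset_uniq.
apply: ler_sum_seq => _ /diffsetP [a aA' [b bA' ->]]; rewrite mulr1n mul1r.
apply: le_trans (ler_wpM2l tm_ge0 (common a b aA' bA')) _.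
by rewrite mulrCA ler_pM2l // popular_common_neighbours_le.
Qed.

End PopularDifferences.

Section Arithmetic.
Variable R : realFieldType.

Lemma bsg_lower_bound_arith (N E E3 D d a : R) :
  0 < N -> 0 < E -> 0 < E3 ->
  E ^+ 2 <= 4 * E3 * D -> D <= 2 * N * d -> 3 * d <= 4 * a ->
  3 / 32 * N / (E3 * (N ^+ 3 / E) ^+ 2 / N ^+ 4) <= a.
Proof.
move=> N_gt0 E_gt0 E3_gt0 hE hD hd.
have -> : 3 / 32 * N / (E3 * (N ^+ 3 / E) ^+ 2 / N ^+ 4) = 3 * E ^+ 2 / (32 * N * E3).
  by field; rewrite !gt_eqF.
rewrite ler_pdivrMr ?mulr_gt0 //.
have := ler_wpM2l (ltW E3_gt0) hD; have := ler_wpM2l (ltW (mulr_gt0 E3_gt0 N_gt0)) hd.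
nra.
Qed.

Lemma bsg_upper_bound_arith (N E E3 D d a X : R) :
  0 < N -> 0 < E -> 0 < E3 -> 0 < D -> 0 < d -> 0 <= X ->
  E ^+ 2 <= 4 * E3 * D -> D <= 2 * N * d -> 3 * d <= 4 * a ->
  X * ((E / (2 * N ^+ 2)) ^+ 4 * (D ^+ 2 / (48 * N ^+ 3)) ^+ 2 * d) <= 3 * N ^+ 8 ->
  X <= 2 ^+ 32 * (E3 * (N ^+ 3 / E) ^+ 2 / N ^+ 4) ^+ 6 * (N ^+ 3 / E) ^+ 4 * a.
Proof.
move=> N_gt0 E_gt0 E3_gt0 D_gt0 d_gt0 X_ge0 hE hD hd.
have [N_ge0 E_ge0 E3_ge0 D_ge0] := And4 (ltW N_gt0) (ltW E_gt0) (ltW E3_gt0) (ltW D_gt0).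
have -> : X * ((E / (2 * N ^+ 2)) ^+ 4 * (D ^+ 2 / (48 * N ^+ 3)) ^+ 2 * d) =
    X * E ^+ 4 * D ^+ 4 * d / (2 ^+ 12 * 9 * N ^+ 14) by field; rewrite !gt_eqF.
rewrite ler_pdivrMr ?mulr_gt0 ?exprn_gt0 // => hX.
have -> : 2 ^+ 32 * (E3 * (N ^+ 3 / E) ^+ 2 / N ^+ 4) ^+ 6 * (N ^+ 3 / E) ^+ 4 * a =
    2 ^+ 32 * E3 ^+ 6 * N ^+ 24 * a / E ^+ 16 by field; rewrite !gt_eqF.
rewrite ler_pdivlMr ?exprn_gt0 //.
have hE12 : (E ^+ 2) ^+ 6 <= (4 * E3 * D) ^+ 6.
  by apply: lerXn2r; rewrite ?nnegrE ?exprn_ge0 ?mulr_ge0.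
have hD2 : D ^+ 2 <= (2 * N * d) ^+ 2.
  by apply: lerXn2r; rewrite ?nnegrE ?mulr_ge0 // ltW.
set P := X * E ^+ 4 * D ^+ 4; set Y := E3 ^+ 6 * N ^+ 24.
have P_ge0 : 0 <= P by rewrite !mulr_ge0 ?exprn_ge0.
have Y_ge0 : 0 <= Y by rewrite mulr_ge0 ?exprn_ge0.
have E3N_ge0 : 0 <= E3 ^+ 6 * N ^+ 2 * d by rewrite !mulr_ge0 ?exprn_ge0 ?ltW.
have -> : X * E ^+ 16 = X * E ^+ 4 * (E ^+ 2) ^+ 6 by ring.
apply: le_trans (ler_wpM2l (mulr_ge0 X_ge0 (exprn_ge0 4 E_ge0)) hE12) _.
have -> : X * E ^+ 4 * (4 * E3 * D) ^+ 6 = 4 ^+ 6 * (E3 ^+ 6 * P * D ^+ 2) by rewrite /P; ring.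
apply: le_trans (ler_wpM2l _ (ler_wpM2l (mulr_ge0 (exprn_ge0 6 E3_ge0) P_ge0) hD2)) _.
  exact: exprn_ge0.
have -> : 4 ^+ 6 * (E3 ^+ 6 * P * (2 * N * d) ^+ 2) =
    4 ^+ 7 * ((E3 ^+ 6 * N ^+ 2 * d) * (P * d)) by ring.
apply: le_trans (ler_wpM2l _ (ler_wpM2l E3N_ge0 hX)) _; first exact: exprn_ge0.
have -> : 4 ^+ 7 * (E3 ^+ 6 * N ^+ 2 * d * (3 * N ^+ 8 * (2 ^+ 12 * 9 * N ^+ 14))) =
    2 ^+ 26 * 9 * (Y * (3 * d)) by rewrite /Y; ring.
apply: le_trans (ler_wpM2l _ (ler_wpM2l Y_ge0 hd)) _; first by rewrite mulr_ge0 ?exprn_ge0.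
have -> : 2 ^+ 32 * E3 ^+ 6 * N ^+ 24 * a = 2 ^+ 32 * (Y * a) by rewrite /Y; ring.
have Ya_ge0 : 0 <= Y * a by rewrite mulr_ge0 //; lra.
rewrite mulrCA; lra.
Qed.

End Arithmetic.

Theorem corollary52 :
  exists c C : rat, 0 < c /\ 0 < C /\
    forall (G : zmodType) (A : {fset G}), A != fset0 ->
      let N : rat := (#|` A|)%:R in
      let K : rat := N ^+ 3 / (energy A)%:R in
      let M : rat := (energyk 3 A)%:R * K ^+ 2 / N ^+ 4 in
      exists A' : {fset G}, A' `<=` A /\
        c * N / M <= (#|` A'|)%:R /\
        (#|` diffset A'|)%:R <= C * M ^+ 6 * K ^+ 4 * (#|` A'|)%:R.
Proof.
exists (3 / 32), (2 ^+ 32); split; first by rewrite divr_gt0.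
split; first by rewrite exprn_gt0.
move=> G A A_neq0 N K M.
have N_gt0 : 0 < N by rewrite ltr0n cardfs_gt0.
have E_gt0 := lt_le_trans (exprn_gt0 2 N_gt0) (sqr_card_le_energyk rat A 1).
have E3_gt0 := lt_le_trans (exprn_gt0 2 N_gt0) (sqr_card_le_energyk rat A 2).
have energy_le := sqr_energy_le rat A_neq0.
have D_gt0 : 0 < edge_count rat A (popular rat A).
  by have := lt_le_trans (exprn_gt0 2 E_gt0) energy_le; rewrite !pmulr_rgt0.
have [w [A' [A'_sub d_gt0 w_rich A'_large common]]] := dependent_random_choice D_gt0.
exists A'; split; first exact: A'_sub.
split; first exact: bsg_lower_bound_arith N_gt0 E_gt0 E3_gt0 energy_le w_rich A'_large.
have := card_diffset_le A_neq0 (codegree_threshold_ge0 D_gt0) common.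
exact: bsg_upper_bound_arith N_gt0 E_gt0 E3_gt0 D_gt0 d_gt0 (ler0n _ _)
  energy_le w_rich A'_large.
Qed.
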